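(* For any oriented tree-structure $\psi$, the $R$-linear map $\nu_0:\mathcal{T}_0(\psi)\to\mathcal{T}_0(\psi)\otimes\mathcal{T}_0(\psi)$ given on generators by $$\nu_0(T,t)=\sum_{e\in\operatorname{edg}(T)}\Big((T^1_e,t|_{T^1_e})\otimes(T^2_e,t|_{T^2_e})-(T^2_e,t|_{T^2_e})\otimes(T^1_e,t|_{T^1_e})\Big)$$ is a Lie cobracket.
   Context: $R$ commutative ring with unit. A Lie cobracket on an $R$-module $A$ is an $R$-linear $\nu:A\to A\otimes A$ with $\operatorname{Perm}\circ\nu=-\nu$ ($\operatorname{Perm}(x\otimes y)=y\otimes x$) and $(\mathrm{id}+\tau+\tau^2)(\mathrm{id}\otimes\nu)\nu=0$, $\tau(x\otimes y\otimes z)=z\otimes x\otimes y$. An oriented tree is a finite tree with oriented edges; its subtrees (trees formed by some of its vertices and edges) inherit orientations. $OTrees$ is the category of oriented trees with orientation-preserving embeddings (homeomorphisms onto subtrees, mapping vertices to vertices and edges to edges). An oriented tree-structure is a contravariant functor $\psi$ from $OTrees$ to sets; an oriented $\psi$-tree is a pair $(T,t)$, $t\in\psi(T)$; $(T,t)$ and $(\tilde T,\tilde t)$ are homeomorphic if there is an (orientation-preserving) homeomorphism $j:T\to\tilde T$ with $\psi(j)(\tilde t)=t$; $t|_{T'}=\psi(\iota)(t)$ for the inclusion $\iota:T'\to T$. $\mathcal{T}_0(\psi)$ is the free $R$-module on homeomorphism classes of oriented $\psi$-trees. For an edge $e$, removing its interior leaves two subtrees $T^1_e,T^2_e$, numbered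 so that $e$ is directed from a vertex of $T^2_e$ to a vertex of $T^1_e$. *)

From HB Require Import structures.
From mathcomp Require Import all_boot all_order all_algebra.
From mathcomp Require Import boolp.
From mathcomp.multinomials Require Import freeg.
From Stdlib Require Import ClassicalEpsilon.

Set Implicit Arguments.
Unset Strict Implicit.
Unset Printing Implicit Defensive.

Import GRing.Theory.
Local Open Scope ring_scope.

Definition adj_on (nv ne : nat) (src tgt : 'I_ne -> 'I_nv) (ok : pred 'I_ne)
  : rel 'I_nv :=
  fun x y => [exists e, ok e &&
     (((src e == x) && (tgt e == y)) || ((src e == y) && (tgt e == x)))].

Definition is_tree (nv ne : nat) (src tgt : 'I_ne -> 'I_nv) : bool :=
  (nv == ne.+1) && [forall x, forall y, connect (adj_on src tgt predT) x y].

Record otree := OTree {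
  onv : nat;
  one : nat;
  osrc : 'I_one -> 'I_onv;
  otgt : 'I_one -> 'I_onv;
  otree_ok : is_tree osrc otgt }.

Record emb (T T' : otree) := Emb {
  emb_v : 'I_(onv T) -> 'I_(onv T');
  emb_e : 'I_(one T) -> 'I_(one T');
  emb_v_inj : injective emb_v;
  emb_e_inj : injective emb_e;
  emb_src : forall e, @osrc T' (emb_e e) = emb_v (@osrc T e);
  emb_tgt : forall e, @otgt T' (emb_e e) = emb_v (@otgt T e) }.

Definition emb_id (T : otree) : emb T T :=
  @Emb T T id id (@inj_id _) (@inj_id _) (fun _ => erefl) (fun _ => erefl).

Definition emb_comp (T1 T2 T3 : otree) (g : emb T2 T3) (f : emb T1 T2) : emb T1 T3.
Proof.
refine (@Emb T1 T3 (emb_v g \o emb_v f) (emb_e g \o emb_e f)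
          (inj_comp (@emb_v_inj _ _ g) (@emb_v_inj _ _ f))
          (inj_comp (@emb_e_inj _ _ g) (@emb_e_inj _ _ f)) _ _).
- by move=> e /=; rewrite emb_src emb_src.
- by move=> e /=; rewrite emb_tgt emb_tgt.
Defined.

Record otree_structure := OTreeStructure {
  psi_obj : otree -> Type;
  psi_map : forall T T' : otree, emb T T' -> psi_obj T' -> psi_obj T;
  psi_id : forall T (x : psi_obj T), psi_map (emb_id T) x = x;
  psi_comp : forall T1 T2 T3 (g : emb T2 T3) (f : emb T1 T2) (x : psi_obj T3),
      psi_map (emb_comp g f) x = psi_map f (psi_map g x) }.

Section PsiTrees.
Variable psi : otree_structure.

Definition psitree := {T : otree & psi_obj psi T}.

Definition homeo (x y : psitree) : Prop :=
  exists j : emb (projT1 x) (projT1 y),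
    [/\ bijective (emb_v j), bijective (emb_e j) &
        psi_map j (projT2 y) = projT2 x].

Definition hclass := {P : psitree -> Prop | exists x, P = homeo x}.

HB.instance Definition _ := gen_eqMixin hclass.
HB.instance Definition _ := gen_choiceMixin hclass.

Definition cls (x : psitree) : hclass := exist _ (homeo x) (ex_intro _ x erefl).

(* For an edge e of T: T^1_e is the subtree containing the target of e,
   T^2_e the one containing its source, after removing the interior of e.
   [is_piece T e b S i] says that the embedding i : S -> T is an isomorphism
   onto T^1_e (b = true) resp. T^2_e (b = false). *)
Definition piece_v (T : otree) (e : 'I_(one T)) (b : bool) : pred 'I_(onv T) :=
  fun v => connect (adj_on (@osrc T) (@otgt T) (predC1 e))
                   (if b then @otgt T e else @osrc T e) v.

Definition is_piece (T : otree) (e : 'I_(one T)) (b : bool)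
    (S : otree) (i : emb S T) : Prop :=
  (forall v, piece_v e b v <-> exists w, emb_v i w = v) /\
  (forall f, ((f != e) && piece_v e b (@osrc T f) && piece_v e b (@otgt T f))
              <-> exists g, emb_e i g = f).

End PsiTrees.

(* Free modules and tensor products.  The free R-module on a set X is  *)
(* {freeg X / R}; the tensor product of free modules on X and Y is     *)
(* realized as the free module on X * Y (basis x (x) y <-> (x, y)).    *)

Section Tensor.
Variables (R : comNzRingType) (K : choiceType).

Definition F1 := {freeg K / R}.
Definition F2 := {freeg (K * K)%type / R}.
Definition F3 := {freeg (K * K * K)%type / R}.

Definition tperm : F2 -> F2 := fglift (fun p : K * K => << (p.2, p.1) >> : F2).

Definition ttau : F3 -> F3 :=
  fglift (fun p : K * K * K => << (p.2, p.1.1, p.1.2) >> : F3).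

Definition id_tensor (nu : F1 -> F2) : F2 -> F3 :=
  fglift (fun p : K * K =>
    fglift (fun q : K * K => << (p.1, q.1, q.2) >> : F3) (nu << p.2 >>)).

Definition lie_cobracket (nu : F1 -> F2) : Prop :=
  [/\ linear nu,
      forall x, tperm (nu x) = - nu x &
      forall x, let w := id_tensor nu (nu x) in w + ttau w + ttau (ttau w) = 0].

End Tensor.

(* The cobracket nu_0 on T_0(psi) = {freeg hclass psi / R}.            *)

Section Nu0.
Variables (R : comNzRingType) (psi : otree_structure).

Local Notation K := (hclass psi).

Definition nu_edge (T : otree) (t : psi_obj psi T) (e : 'I_(one T)) : F2 R K :=
  epsilon (inhabits 0) (fun z : F2 R K =>
    exists (S1 : otree) (i1 : emb S1 T) (S2 : otree) (i2 : emb S2 T),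
      [/\ is_piece e true i1, is_piece e false i2 &
        let c1 := cls (existT _ S1 (psi_map i1 t)) in
        let c2 := cls (existT _ S2 (psi_map i2 t)) in
        z = << (c1, c2) >> - << (c2, c1) >>]).

Definition nu0_gen (c : K) : F2 R K :=
  epsilon (inhabits 0) (fun z : F2 R K =>
    exists (T : otree) (t : psi_obj psi T),
      cls (existT _ T t) = c /\ z = \sum_(e < one T) nu_edge t e).

Definition nu0 : F1 R K -> F2 R K := fglift nu0_gen.

End Nu0.

(* [nu0 (T, t)] is a sum over the edges [e] of [T] of wedges [T1 (x) T2 - T2 (x) T1]
   of the two sides of [e], so it is antisymmetric termwise.  Applying
   [id (x) nu0] cuts [(T, t)] at an ordered pair [(e, f)] of distinct edges into
   three pieces: the far side [Xe] of [e], the far side [Xf] of [f] and the middle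
   part [M]; the resulting term is [+/- Xe (x) (Xf (x) M - M (x) Xf)].  The pair
   [(f, e)] yields the same pieces with [Xe] and [Xf] exchanged and the same sign,
   and [x (x) (y (x) m - m (x) y) + y (x) (x (x) m - m (x) x)] has zero cyclic
   sum; hence the co-Jacobi sum cancels pairwise.  Pieces are handled as
   subtrees induced on vertex sets, which determine them up to homeomorphism. *)

From Pilot Require Import Defs.
From HB Require Import structures.
From mathcomp Require Import all_boot all_order all_algebra.
From mathcomp Require Import ssrAC zify.
From mathcomp.multinomials Require Import freeg.
From Stdlib Require Import ClassicalEpsilon FunctionalExtensionality.
From Stdlib Require Import ProofIrrelevance PropExtensionality.

Set Implicit Arguments.
Unset Strict Implicit.
Unset Printing Implicit Defensive.

(** * Walks in graphs given by edge lists *)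

Section AdjOn.
Variables (nv ne : nat) (src tgt : 'I_ne -> 'I_nv).
Local Notation adj := (adj_on src tgt).

Lemma adj_on_sym (ok : pred 'I_ne) : symmetric (adj ok).
Proof.
by move=> x y; apply/existsP/existsP => -[e He]; exists e; rewrite orbC.
Qed.

Lemma adj_onP (ok : pred 'I_ne) x y :
  reflect (exists2 e, ok e &
             (src e == x) && (tgt e == y) || (src e == y) && (tgt e == x))
          (adj ok x y).
Proof.
apply: (iffP existsP) => [[e /andP [oke He]] | [e oke He]]; first by exists e.
by exists e; rewrite oke He.
Qed.

Lemma adj_on_edge (ok : pred 'I_ne) e : ok e -> adj ok (src e) (tgt e).
Proof. by move=> oke; apply/adj_onP; exists e; rewrite ?eqxx. Qed.

Lemma sub_adj_on (ok ok' : pred 'I_ne) :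
  subpred ok ok' -> subrel (adj ok) (adj ok').
Proof. by move=> sub x y /adj_onP [e /sub oke He]; apply/adj_onP; exists e. Qed.

Lemma sub_connect_adj_on (ok ok' : pred 'I_ne) :
  subpred ok ok' -> subrel (connect (adj ok)) (connect (adj ok')).
Proof.
by move=> sub; apply: connect_sub => x y /(sub_adj_on sub); apply: connect1.
Qed.

Lemma eq_adj_on (ok ok' : pred 'I_ne) : ok =1 ok' -> adj ok =2 adj ok'.
Proof. by move=> eq_ok x y; apply/idP/idP; apply: sub_adj_on => f; rewrite eq_ok. Qed.

Lemma connect_adj_on_sym (ok : pred 'I_ne) x y :
  connect (adj ok) x y = connect (adj ok) y x.
Proof. exact: (sym_connect_sym (@adj_on_sym ok)). Qed.

Lemma connect_adj_on_split (ok : pred 'I_ne) f x y :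
  connect (adj ok) x y ->
  [\/ connect (adj [pred g | ok g && (g != f)]) x y,
      connect (adj [pred g | ok g && (g != f)]) x (src f) |
      connect (adj [pred g | ok g && (g != f)]) x (tgt f)].
Proof.
case/connectP => p pp ->; elim: p x pp => [|z p IH] x /=.
  by move=> _; apply: Or31; apply: connect0.
case/andP => /adj_onP [g okg Hg] pp.
have [<- | gf] := eqVneq g f.
  case/orP: Hg => /andP [/eqP s /eqP t].
    by apply: Or32; rewrite s connect0.
  by apply: Or33; rewrite t connect0.
have a : adj [pred h | ok h && (h != f)] x z.
  by apply/adj_onP; exists g => //=; rewrite okg gf.
by case: (IH z pp) => c; [apply: Or31 | apply: Or32 | apply: Or33];
  apply: connect_trans (connect1 a) c.
Qed.

Section ConnectedCard.
Variables (ok : pred 'I_ne) (r : 'I_nv).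
Hypothesis connected : forall x y, connect (adj ok) x y.

Fixpoint reach_within (k : nat) (v : 'I_nv) : bool :=
  if k is k'.+1 then reach_within k' v || [exists u, adj ok u v && reach_within k' u]
  else v == r.

Lemma reach_within_path x p k : path (adj ok) x p -> reach_within k x ->
  reach_within (k + size p) (last x p).
Proof.
elim: p x k => [|y p IH] x k /=; first by rewrite addn0.
case/andP => axy pp rk; rewrite addnS -addSn; apply: IH => //=.
by apply/orP; right; apply/existsP; exists x; rewrite axy rk.
Qed.

Lemma reach_within_ex v : exists k, reach_within k v.
Proof.
have /connectP [p pp ->] := connected r v; exists (0 + size p).
by apply: reach_within_path => //=.
Qed.

Definition depth v := ex_minn (reach_within_ex v).

Lemma reach_within_depth v : reach_within (depth v) v.
Proof. by rewrite /depth; case: ex_minnP. Qed.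

Lemma depth_min v k : reach_within k v -> depth v <= k.
Proof. by rewrite /depth; case: ex_minnP => m _ H /H. Qed.

Lemma depth_parent v : v != r -> exists2 u, adj ok u v & depth u < depth v.
Proof.
move=> vr; have := reach_within_depth v; case E: (depth v) => [|k] /=.
  by move/eqP => vr'; rewrite vr' eqxx in vr.
case/orP => [rk | /existsP [u /andP [a ru]]].
  by have := depth_min rk; rewrite E ltnn.
by exists u => //; have := depth_min ru; rewrite ltnS.
Qed.

Definition parent_edge_of v : pred 'I_ne := [pred e | ok e &&
  (((src e == v) && (depth (tgt e) < depth v)) ||
   ((tgt e == v) && (depth (src e) < depth v)))].

Lemma parent_edge_ex v : v != r -> exists e, parent_edge_of v e.
Proof.
move=> /depth_parent [u /adj_onP [e oke He] du]; exists e.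
rewrite /parent_edge_of /= oke.
by case/orP: He => /andP [/eqP -> /eqP ->]; rewrite eqxx du ?orbT.
Qed.

Definition parent_edge v := [pick e | parent_edge_of v e].

Lemma parent_edgeP v : v != r -> exists2 e, parent_edge v = Some e & parent_edge_of v e.
Proof.
move=> vr; rewrite /parent_edge; case: pickP => [e He | none]; first by exists e.
by have [e] := parent_edge_ex vr; rewrite none.
Qed.

(* [v] is the deeper end of its parent edge, so the parent edge determines [v]. *)
Lemma parent_edge_inj : {in predC1 r &, injective parent_edge}.
Proof.
move=> u v ur vr; have [e -> /andP [_ He]] := parent_edgeP ur.
have [f -> /andP [_ Hf]] := parent_edgeP vr; case=> ef; subst f.
apply/eqP; apply/negPn/negP => uv.
case/orP: He => /andP [/eqP s1 d1]; case/orP: Hf => /andP [/eqP s2 d2].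
- by rewrite -s1 s2 eqxx in uv.
- by rewrite s1 in d2; rewrite s2 in d1; have := ltn_trans d1 d2; rewrite ltnn.
- by rewrite s1 in d2; rewrite s2 in d1; have := ltn_trans d1 d2; rewrite ltnn.
- by rewrite -s1 s2 eqxx in uv.
Qed.

Lemma connected_card_le_root : nv <= #|ok|.+1.
Proof.
have card_im : #|[set parent_edge v | v in predC1 r]| = #|predC1 r|.
  exact: card_in_imset parent_edge_inj.
have sub_ok : [set parent_edge v | v in predC1 r] \subset [set Some e | e in ok].
  apply/subsetP => _ /imsetP [v vr ->]; have [e -> /andP [oke _]] := parent_edgeP vr.
  exact: imset_f.
have := subset_leq_card sub_ok; rewrite card_im card_imset; last by move=> a b [].
by rewrite cardC1 card_ord; case: (nv).
Qed.

End ConnectedCard.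

Lemma connected_card_le (ok : pred 'I_ne) :
  (forall x y, connect (adj ok) x y) -> nv <= #|ok|.+1.
Proof.
move=> conn; case: (posnP nv) => [-> // | nv_gt0].
exact: (connected_card_le_root (Ordinal nv_gt0) conn).
Qed.

End AdjOn.

Section AdjOnMorphism.
Variables (nvS neS nvT neT : nat).
Variables (srcS tgtS : 'I_neS -> 'I_nvS) (srcT tgtT : 'I_neT -> 'I_nvT).
Variables (vm : 'I_nvS -> 'I_nvT) (em : 'I_neS -> 'I_neT).
Hypothesis vm_inj : injective vm.
Hypothesis em_src : forall g, srcT (em g) = vm (srcS g).
Hypothesis em_tgt : forall g, tgtT (em g) = vm (tgtS g).
Variables (okS : pred 'I_neS) (okT : pred 'I_neT).

Lemma connect_adj_on_map : (forall g, okS g -> okT (em g)) ->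
  forall x y, connect (adj_on srcS tgtS okS) x y ->
    connect (adj_on srcT tgtT okT) (vm x) (vm y).
Proof.
move=> hok x y /connectP [p pp ->]; elim: p x pp => [|z p IH] x /=.
  by rewrite connect0.
case/andP => /adj_onP [g okg Hg] pp; apply: connect_trans (IH _ pp).
apply: connect1; apply/adj_onP; exists (em g); first exact: hok.
by rewrite em_src em_tgt !(inj_eq vm_inj).
Qed.

Variable A : pred 'I_nvT.
Hypothesis A_vm : forall w, A (vm w).
Hypothesis em_onto : forall f, okT f -> A (srcT f) -> A (tgtT f) ->
  exists2 g, okS g & em g = f.
Hypothesis A_closed : forall f, okT f -> A (srcT f) = A (tgtT f).

Lemma adj_on_lift x z : adj_on srcT tgtT okT (vm x) z ->
  exists2 y, vm y = z & adj_on srcS tgtS okS x y.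
Proof.
case/adj_onP => f okf /orP [] /andP [/eqP s /eqP t].
- have As : A (srcT f) by rewrite s.
  have At : A (tgtT f) by rewrite -(A_closed okf).
  have [g okg eg] := em_onto okf As At.
  exists (tgtS g); first by rewrite -em_tgt eg.
  apply/adj_onP; exists g => //; apply/orP; left.
  by rewrite -!(inj_eq vm_inj) -em_src -em_tgt eg s t !eqxx.
- have At : A (tgtT f) by rewrite t.
  have As : A (srcT f) by rewrite (A_closed okf).
  have [g okg eg] := em_onto okf As At.
  exists (srcS g); first by rewrite -em_src eg.
  apply/adj_onP; exists g => //; apply/orP; right.
  by rewrite -!(inj_eq vm_inj) -em_src -em_tgt eg s t !eqxx.
Qed.

Lemma connect_adj_on_lift x v : connect (adj_on srcT tgtT okT) (vm x) v ->
  exists2 y, vm y = v & connect (adj_on srcS tgtS okS) x y.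
Proof.
case/connectP => p pp ->; elim: p x pp => [|z p IH] x /=.
  by move=> _; exists x; rewrite ?connect0.
case/andP => /adj_on_lift [y <- axy] /IH [y' <- cy].
by exists y' => //; apply: connect_trans (connect1 axy) cy.
Qed.

End AdjOnMorphism.

(** * The two sides of an edge of a tree *)

Definition endp (T : otree) (e : 'I_(Defs.one T)) (b : bool) : 'I_(onv T) :=
  if b then otgt e else osrc e.

Lemma emb_endp (S T : otree) (i : emb S T) g b :
  emb_v i (endp g b) = endp (emb_e i g) b.
Proof. by case: b; rewrite /endp ?emb_src ?emb_tgt. Qed.

Section Tree.
Variable T : otree.
Local Notation src := (@osrc T).
Local Notation tgt := (@otgt T).
Local Notation adjT := (adj_on src tgt).

Lemma tree_card : onv T = (Defs.one T).+1.
Proof. by case: T => ? ? ? ? /= /andP [/eqP]. Qed.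

Lemma tree_connect x y : connect (adjT predT) x y.
Proof. by case: T x y => ? ? ? ? /= /andP [_ /forallP H] x y; have /forallP := H x. Qed.

Section Edge.
Variable e : 'I_(Defs.one T).
Local Notation pv := (piece_v e).

Lemma piece_vE b v : pv b v = connect (adjT (predC1 e)) (endp e b) v.
Proof. by case: b. Qed.

Lemma piece_v_endp b : pv b (endp e b).
Proof. by rewrite piece_vE connect0. Qed.

Lemma piece_v_src_tgt b f : f != e -> pv b (src f) = pv b (tgt f).
Proof.
move=> fe; rewrite !piece_vE; apply/idP/idP => h; apply: connect_trans h (connect1 _).
  exact: adj_on_edge.
by rewrite adj_on_sym; apply: adj_on_edge.
Qed.

Lemma piece_v_cover v : pv true v || pv false v.
Proof.
have cl : closed (adjT predT) [pred u | pv true u || pv false u].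
  move=> x y /adj_onP [g _ Hg] /=; have [ge | ge] := eqVneq g e; last first.
    by case/orP: Hg => /andP [/eqP <- /eqP <-]; rewrite !inE /= !(piece_v_src_tgt _ ge).
  subst g; case/orP: Hg => /andP [/eqP <- /eqP <-];
    by rewrite !inE /= -[src e]/(endp e false) -[tgt e]/(endp e true) !piece_v_endp orbT.
have := closed_connect cl (tree_connect (tgt e) v).
by rewrite !inE (piece_v_endp true) => <-.
Qed.

(* Otherwise [T] minus [e] would still be connected, with too few edges. *)
Lemma piece_v_disjoint v : ~~ (pv true v && pv false v).
Proof.
apply/negP => /andP [h1 h2].
have c : connect (adjT (predC1 e)) (tgt e) (src e).
  by apply: connect_trans h1 _; rewrite connect_adj_on_sym.
have from_tgt x : connect (adjT (predC1 e)) (tgt e) x.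
  by case/orP: (piece_v_cover x) => // hx; apply: connect_trans c hx.
have conn x y : connect (adjT (predC1 e)) x y.
  by apply: connect_trans (from_tgt y); rewrite connect_adj_on_sym.
have := connected_card_le conn; rewrite cardC1 card_ord tree_card.
have := ltn_ord e; lia.
Qed.

Lemma piece_vN b v : pv (~~ b) v = ~~ pv b v.
Proof.
have := piece_v_cover v; have := piece_v_disjoint v.
by case: b; case: (pv true v); case: (pv false v).
Qed.

Lemma piece_v_edge b : ~~ (pv b (src e) && pv b (tgt e)).
Proof.
have := piece_v_endp (~~ b); rewrite piece_vN.
by case: b => /= /negbTE ->; rewrite ?andbF.
Qed.

Section Piece.
Variable b : bool.

Definition piece_verts : {pred 'I_(onv T)} := [pred v | pv b v].
Definition piece_edges : {pred 'I_(Defs.one T)} :=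
  [pred f | (f != e) && pv b (src f) && pv b (tgt f)].

Lemma piece_verts_endp : endp e b \in piece_verts.
Proof. exact: piece_v_endp. Qed.

Definition piece_vmap : 'I_#|piece_verts| -> 'I_(onv T) := enum_val.
Definition piece_emap : 'I_#|piece_edges| -> 'I_(Defs.one T) := enum_val.
Definition piece_src g : 'I_#|piece_verts| :=
  enum_rank_in piece_verts_endp (src (piece_emap g)).
Definition piece_tgt g : 'I_#|piece_verts| :=
  enum_rank_in piece_verts_endp (tgt (piece_emap g)).

Lemma piece_srcE g : src (piece_emap g) = piece_vmap (piece_src g).
Proof.
rewrite /piece_src /piece_vmap enum_rankK_in //; have := enum_valP g.
by rewrite !inE => /andP [/andP [_ ->]].
Qed.

Lemma piece_tgtE g : tgt (piece_emap g) = piece_vmap (piece_tgt g).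
Proof.
rewrite /piece_tgt /piece_vmap enum_rankK_in //; have := enum_valP g.
by rewrite !inE => /andP [_ ->].
Qed.

Lemma piece_connect_endp z :
  connect (adj_on piece_src piece_tgt predT) (enum_rank_in piece_verts_endp (endp e b)) z.
Proof.
have hv : connect (adjT (predC1 e))
    (piece_vmap (enum_rank_in piece_verts_endp (endp e b))) (piece_vmap z).
  rewrite /piece_vmap enum_rankK_in ?piece_verts_endp // -piece_vE.
  exact: (enum_valP z).
have := connect_adj_on_lift (@enum_val_inj _ piece_verts) piece_srcE piece_tgtE
  (okS := predT) (A := piece_verts) _ _ _ hv.
case=> [w | f fe Af At | f fe | w /(@enum_val_inj _ piece_verts) <- //].
- exact: (@enum_valP _ piece_verts).
- have Hf : f \in piece_edges by rewrite inE /=; apply/andP; split; first apply/andP.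
  by exists (enum_rank_in Hf f) => //; apply: enum_rankK_in.
- exact: piece_v_src_tgt.
Qed.

Lemma piece_connect x y : connect (adj_on piece_src piece_tgt predT) x y.
Proof.
apply: connect_trans (piece_connect_endp y).
by rewrite connect_adj_on_sym piece_connect_endp.
Qed.

Lemma card_piece_verts_le : #|piece_verts| <= #|piece_edges|.+1.
Proof. by have := connected_card_le piece_connect; rewrite cardT size_enum_ord. Qed.

End Piece.

Lemma card_piece_verts b : #|piece_verts b| = #|piece_edges b|.+1.
Proof.
have verts : #|piece_verts true| + #|piece_verts false| = onv T.
  rewrite -cardUI (@eq_card0 _ [predI _ & _]) ?addn0.
    by rewrite -[RHS]card_ord; apply: eq_card => v; rewrite !inE /= piece_v_cover.
  by move=> v; rewrite !inE /=; apply/negbTE/piece_v_disjoint.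
have edges : #|piece_edges true| + #|piece_edges false| = (Defs.one T).-1.
  rewrite -cardUI (@eq_card0 _ [predI _ & _]) ?addn0.
    rewrite -[in RHS](card_ord (Defs.one T)) -(cardC1 e); apply: eq_card => f; rewrite !inE /=.
    have [// | fe] := eqVneq f e; rewrite -!(piece_v_src_tgt _ fe) !andbb.
    exact: piece_v_cover.
  move=> f; rewrite !inE /=; case: (f != e) => //=; rewrite -!andbA.
  apply/negbTE/negP => /and4P [hT _ hF _].
  by have := piece_v_disjoint (src f); rewrite hT hF.
have := card_piece_verts_le true; have := card_piece_verts_le false.
have := ltn_ord e; have := tree_card; case: b; lia.
Qed.

Section PieceTree.
Variable b : bool.

Lemma piece_is_tree : is_tree (@piece_src b) (@piece_tgt b).
Proof.
apply/andP; split; first by rewrite card_piece_verts.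
by apply/forallP => x; apply/forallP => y; apply: piece_connect.
Qed.

Definition piece_tree : otree := OTree piece_is_tree.

Definition piece_emb : emb piece_tree T :=
  @Emb piece_tree T (@piece_vmap b) (@piece_emap b)
    (@enum_val_inj _ _) (@enum_val_inj _ _) (@piece_srcE b) (@piece_tgtE b).

Lemma piece_emb_is_piece : is_piece e b piece_emb.
Proof.
split=> [v | f]; split=> [h | [w <-]].
- by exists (enum_rank_in (h : v \in piece_verts b) v); rewrite /= /piece_vmap enum_rankK_in.
- exact: (@enum_valP _ (piece_verts b)).
- by exists (enum_rank_in (h : f \in piece_edges b) f); rewrite /= /piece_emap enum_rankK_in.
- exact: (@enum_valP _ (piece_edges b)).
Qed.

End PieceTree.
End Edge.
End Tree.

(** * Induced subtrees and their homeomorphism classes *)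

Lemma emb_ext (S T : otree) (f g : emb S T) :
  emb_v f =1 emb_v g -> emb_e f =1 emb_e g -> f = g.
Proof.
case: f => fv fe fvi fei fs ft; case: g => gv ge gvi gei gs gt /= hv he.
have ev : fv = gv by apply: functional_extensionality.
have ee : fe = ge by apply: functional_extensionality.
subst gv ge.
by rewrite (proof_irrelevance _ fvi gvi) (proof_irrelevance _ fei gei)
  (proof_irrelevance _ fs gs) (proof_irrelevance _ ft gt).
Qed.

Definition induced (S T : otree) (i : emb S T) (A : pred 'I_(onv T)) : Prop :=
  (forall v, A v <-> exists w, emb_v i w = v) /\
  (forall f, A (osrc f) && A (otgt f) <-> exists g, emb_e i g = f).

Lemma eq_induced S T (i : emb S T) (A A' : pred 'I_(onv T)) :
  A =1 A' -> induced i A -> induced i A'.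
Proof.
by move=> eqA [iv ie]; split=> [v | f]; rewrite -?eqA; [apply: iv | apply: ie].
Qed.

Lemma induced_mem S T (i : emb S T) A w : induced i A -> A (emb_v i w).
Proof. by case=> iv _; apply/iv; exists w. Qed.

Lemma piece_induced T e b S (i : emb S T) :
  is_piece e b i -> induced i (piece_v e b).
Proof.
case=> iv ie; split=> // f; rewrite -ie; have [-> | fe] := eqVneq f e => //=.
by split=> // h; have := piece_v_edge e b; rewrite h.
Qed.

Lemma bij_induced S T (j : emb S T) :
  bijective (emb_v j) -> bijective (emb_e j) -> induced j predT.
Proof.
case=> jv' _ jvK; case=> je' _ jeK.
by split=> [v | f]; split=> // _; [exists (jv' v) | exists (je' f)].
Qed.

Definition emb_img (S T : otree) (i : emb S T) (B : pred 'I_(onv S)) : pred 'I_(onv T) :=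
  fun v => [exists w, (emb_v i w == v) && B w].

Lemma induced_comp (S1 S T : otree) (i : emb S T) (j : emb S1 S) A B :
  induced i A -> induced j B -> induced (emb_comp i j) (emb_img i B).
Proof.
move=> [iv ie] [jv je]; split=> [v | f].
  split=> [/existsP [w /andP [/eqP <- Bw]] | [w' <-]].
    by have [w' <-] := (jv w).1 Bw; exists w'.
  by apply/existsP; exists (emb_v j w'); rewrite eqxx /=; apply/jv; exists w'.
split=> [/andP [/existsP [w1 /andP [/eqP e1 B1]] /existsP [w2 /andP [/eqP e2 B2]]] | [h <-]].
  have [g eg] : exists g, emb_e i g = f.
    by apply/ie; rewrite -e1 -e2; apply/andP; split; apply/iv; [exists w1 | exists w2].
  have s1 : osrc g = w1 by apply: (@emb_v_inj _ _ i); rewrite -emb_src eg.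
  have s2 : otgt g = w2 by apply: (@emb_v_inj _ _ i); rewrite -emb_tgt eg.
  have [h eh] : exists h, emb_e j h = g by apply/je; rewrite s1 s2 B1 B2.
  by exists h; rewrite /= eh.
apply/andP; split; apply/existsP; [exists (emb_v j (osrc h)) | exists (emb_v j (otgt h))];
  rewrite /= ?emb_src ?emb_tgt eqxx /=; apply/jv; by [exists (osrc h) | exists (otgt h)].
Qed.

Lemma induced_factor S S' T (i : emb S T) (i' : emb S' T) A :
  induced i A -> induced i' A ->
  exists j : emb S S', (forall w, emb_v i' (emb_v j w) = emb_v i w) /\
                       (forall g, emb_e i' (emb_e j g) = emb_e i g).
Proof.
move=> [iv ie] [iv' ie'].
have exv w : exists w', emb_v i' w' == emb_v i w.
  have /iv' [w' ew] : A (emb_v i w) by apply/iv; exists w.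
  by exists w'; rewrite ew.
have exe g : exists g', emb_e i' g' == emb_e i g.
  have /ie' [g' eg] : A (osrc (emb_e i g)) && A (otgt (emb_e i g)) by apply/ie; exists g.
  by exists g'; rewrite eg.
pose jv w := xchoose (exv w); pose je g := xchoose (exe g).
have jvE w : emb_v i' (jv w) = emb_v i w by apply/eqP; apply: (xchooseP (exv w)).
have jeE g : emb_e i' (je g) = emb_e i g by apply/eqP; apply: (xchooseP (exe g)).
have jv_inj : injective jv.
  by move=> w1 w2 /(congr1 (emb_v i')); rewrite !jvE => /(@emb_v_inj _ _ i).
have je_inj : injective je.
  by move=> g1 g2 /(congr1 (emb_e i')); rewrite !jeE => /(@emb_e_inj _ _ i).
have j_src g : osrc (je g) = jv (osrc g).
  by apply: (@emb_v_inj _ _ i'); rewrite -emb_src jvE jeE emb_src.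
have j_tgt g : otgt (je g) = jv (otgt g).
  by apply: (@emb_v_inj _ _ i'); rewrite -emb_tgt jvE jeE emb_tgt.
by exists (Emb jv_inj je_inj j_src j_tgt).
Qed.

Section Homeo.
Variable psi : otree_structure.
Local Notation cls := (@cls psi).
Local Notation homeo := (@homeo psi).

Definition ptree (T : otree) (t : psi_obj psi T) : psitree psi := existT _ T t.

Lemma homeo_refl x : homeo x x.
Proof.
by exists (emb_id _); split; [exists id | exists id | apply: psi_id].
Qed.

Lemma homeo_sym x y : homeo x y -> homeo y x.
Proof.
case: x y => [Tx tx] [Ty ty] [j [[jv' jvK jvK'] [je' jeK jeK'] /= ht]].
have j_src f : osrc (je' f) = jv' (osrc f).
  by apply: (@emb_v_inj _ _ j); rewrite -emb_src jeK' jvK'.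
have j_tgt f : otgt (je' f) = jv' (otgt f).
  by apply: (@emb_v_inj _ _ j); rewrite -emb_tgt jeK' jvK'.
pose j' := Emb (can_inj jvK') (can_inj jeK') j_src j_tgt.
exists j'; split; [by exists (emb_v j) | by exists (emb_e j) |] => /=.
rewrite -ht -psi_comp (_ : emb_comp j j' = emb_id Ty) ?psi_id //.
by apply: emb_ext => v /=; rewrite ?jvK' ?jeK'.
Qed.

Lemma homeo_trans x y z : homeo x y -> homeo y z -> homeo x z.
Proof.
case: x y z => [Tx tx] [Ty ty] [Tz tz] [j1 [bv1 be1 /= h1]] [j2 [bv2 be2 /= h2]].
by exists (emb_comp j2 j1); split; [exact: bij_comp | exact: bij_comp | rewrite psi_comp h2].
Qed.

Lemma homeo_cls x y : homeo x y -> cls x = cls y.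
Proof.
move=> hxy; apply: subset_eq_compat; apply: functional_extensionality => z.
apply: propositional_extensionality.
by split=> h; [apply: homeo_trans (homeo_sym hxy) h | apply: homeo_trans hxy h].
Qed.

Lemma cls_homeo x y : cls x = cls y -> homeo x y.
Proof. by move=> /(congr1 sval) /= ->; apply: homeo_refl. Qed.

Lemma cls_surj (c : hclass psi) : exists x, cls x = c.
Proof. by case: c => P [x eP]; exists x; apply: subset_eq_compat. Qed.

Lemma induced_cls T (t : psi_obj psi T) S (i : emb S T) S' (i' : emb S' T) A :
  induced i A -> induced i' A ->
  cls (ptree (psi_map i t)) = cls (ptree (psi_map i' t)).
Proof.
move=> hi hi'; have [j [jv je]] := induced_factor hi hi'.
have [k [kv ke]] := induced_factor hi' hi.
apply: homeo_cls; exists j; split.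
- by exists (emb_v k) => w;
    [apply: (@emb_v_inj _ _ i) | apply: (@emb_v_inj _ _ i')]; rewrite ?kv ?jv.
- by exists (emb_e k) => g;
    [apply: (@emb_e_inj _ _ i) | apply: (@emb_e_inj _ _ i')]; rewrite ?ke ?je.
- by rewrite /= -psi_comp; congr (psi_map _ t); apply: emb_ext => x /=.
Qed.

(* The class of the subtree of [(T, t)] induced on [A]; junk value [cls (T, t)]
   when [A] induces no subtree. *)
Definition sub_cls T (t : psi_obj psi T) (A : pred 'I_(onv T)) : hclass psi :=
  epsilon (inhabits (cls (ptree t)))
    (fun c => exists S (i : emb S T), induced i A /\ c = cls (ptree (psi_map i t))).

Lemma sub_cls_induced T (t : psi_obj psi T) A S (i : emb S T) :
  induced i A -> sub_cls t A = cls (ptree (psi_map i t)).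
Proof.
move=> hi; rewrite /sub_cls; set P := fun c => _.
have [|S' [i' [hi' ->]]] := epsilon_spec (inhabits (cls (ptree t))) P.
  by exists (cls (ptree (psi_map i t))), S, i.
exact: induced_cls hi' hi.
Qed.

Lemma eq_sub_cls T (t : psi_obj psi T) A A' S (i : emb S T) :
  induced i A -> A =1 A' -> sub_cls t A = sub_cls t A'.
Proof.
by move=> hi eqA; rewrite (sub_cls_induced t hi) (sub_cls_induced t (eq_induced eqA hi)).
Qed.

End Homeo.

Section HomeoPieces.
Variables (T T' : otree) (j : emb T T').
Hypotheses (bv : bijective (emb_v j)) (be : bijective (emb_e j)).

Lemma piece_v_homeo e b v : piece_v (emb_e j e) b (emb_v j v) = piece_v e b v.
Proof.
rewrite !piece_vE -emb_endp; apply/idP/idP => h; last first.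
  apply: (connect_adj_on_map (@emb_v_inj _ _ j) (@emb_src _ _ j) (@emb_tgt _ _ j) _ h).
  by move=> g ge; rewrite /= (inj_eq (@emb_e_inj _ _ j)).
have [je' _ jeK'] := be.
have lift_edge f : predC1 (emb_e j e) f -> predT (osrc f) -> predT (otgt f) ->
    exists2 g, predC1 e g & emb_e j g = f.
  move=> fe _ _; exists (je' f); last by rewrite jeK'.
  by apply: contra fe => /eqP <-; rewrite jeK'.
have [y /(@emb_v_inj _ _ j) <- //] := connect_adj_on_lift (@emb_v_inj _ _ j)
  (@emb_src _ _ j) (@emb_tgt _ _ j) (A := predT) (fun _ => erefl) lift_edge
  (fun _ _ => erefl) h.
Qed.

Lemma emb_img_piece_v_homeo e b : emb_img j (piece_v e b) =1 piece_v (emb_e j e) b.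
Proof.
move=> v; have [jv' _ jvK'] := bv; rewrite /emb_img.
apply/existsP/idP => [[w /andP [/eqP <-]] | h]; first by rewrite piece_v_homeo.
by exists (jv' v); rewrite jvK' eqxx /= -piece_v_homeo jvK'.
Qed.

End HomeoPieces.

(** * Cutting a tree at two edges *)

Section TwoEdges.
Variable T : otree.
Local Notation src := (@osrc T).
Local Notation tgt := (@otgt T).
Local Notation adjT := (adj_on src tgt).

Definition avoid2 (e f : 'I_(Defs.one T)) : pred 'I_(Defs.one T) :=
  [pred g | (g != e) && (g != f)].

Definition cut2 (e f : 'I_(Defs.one T)) (x : 'I_(onv T)) : pred 'I_(onv T) :=
  connect (adjT (avoid2 e f)) x.

Lemma cut2C e f x : cut2 e f x =1 cut2 f e x.
Proof. by apply: eq_connect; apply: eq_adj_on => g; rewrite /avoid2 /= andbC. Qed.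

Lemma cut2_eq e f x y : cut2 e f x y -> cut2 e f x =1 cut2 e f y.
Proof.
move=> h v; apply/idP/idP => h'; last exact: connect_trans h h'.
by apply: connect_trans h'; rewrite /cut2 connect_adj_on_sym.
Qed.

Lemma piece_v_cut2 e f b : f != e -> ~~ piece_v e b (src f) ->
  piece_v e b =1 cut2 e f (endp e b).
Proof.
move=> fe nf v; rewrite piece_vE; apply/idP/idP => h; last first.
  by apply: sub_connect_adj_on h => g /andP [].
case: (connect_adj_on_split f h) => h'; first exact: h'.
  by move: nf; rewrite piece_vE (sub_connect_adj_on _ h') // => g /andP [].
by move: nf; rewrite (piece_v_src_tgt b fe) piece_vE (sub_connect_adj_on _ h') // => g /andP [].
Qed.

Lemma cut2_endp e f b u : e != f -> connect (adjT (predC1 e)) u (endp f b) ->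
  piece_v f b u -> cut2 e f u (endp f b).
Proof.
move=> ef h hu.
have via_f b' : connect (adjT [pred g | predC1 e g && (g != f)]) u (endp f b') ->
    cut2 e f u (endp f b).
  move=> c; have [<- // | nb] := eqVneq b' b.
  have nb' : b' = ~~ b by case: (b) (b') nb => [] [].
  have : piece_v f b' u.
    rewrite piece_vE connect_adj_on_sym; apply: sub_connect_adj_on c => g /andP [_].
    by rewrite /= eq_sym.
  by rewrite nb' piece_vN hu.
by case: (connect_adj_on_split f h) => [// | |]; [apply: (via_f false) | apply: (via_f true)].
Qed.

Lemma emb_img_piece_v e b S (i : emb S T) (hi : induced i (piece_v e b)) f' b' :
  emb_img i (piece_v f' b') =1 cut2 e (emb_e i f') (endp (emb_e i f') b').
Proof.
have ie g : emb_e i g != e.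
  apply/negP => /eqP ge; have /negP := piece_v_edge e b; apply.
  by apply/hi.2; exists g.
have hok g : predC1 f' g -> avoid2 e (emb_e i f') (emb_e i g).
  by move=> gf; rewrite /avoid2 /= ie (inj_eq (@emb_e_inj _ _ i)).
move=> v; rewrite /emb_img /cut2 -emb_endp; apply/existsP/idP.
  case=> w /andP [/eqP <-]; rewrite piece_vE.
  exact: (connect_adj_on_map (@emb_v_inj _ _ i) (@emb_src _ _ i) (@emb_tgt _ _ i) hok).
move=> h.
have lift_edge g : avoid2 e (emb_e i f') g -> piece_v e b (src g) -> piece_v e b (tgt g) ->
    exists2 g', predC1 f' g' & emb_e i g' = g.
  move=> /andP [ge gf] h1 h2.
  have [g' eg] : exists g', emb_e i g' = g by apply/(hi.2 g); rewrite h1 h2.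
  by exists g' => //=; apply: contra gf => /eqP <-; rewrite eg.
have closed_piece g : avoid2 e (emb_e i f') g -> piece_v e b (src g) = piece_v e b (tgt g).
  by move=> /andP [ge _]; apply: piece_v_src_tgt.
have [y <- hy] := connect_adj_on_lift (@emb_v_inj _ _ i) (@emb_src _ _ i) (@emb_tgt _ _ i)
  (fun w => induced_mem w hi) lift_edge closed_piece h.
by exists y; rewrite eqxx /= piece_vE.
Qed.

(* [cut2 e f x] is the side of [e] containing [x] if [f] is not in it, and
   otherwise a side of [f] inside that side. *)
Lemma cut2_induced e f x : e != f -> exists S (i : emb S T), induced i (cut2 e f x).
Proof.
move=> ef; have fe : f != e by rewrite eq_sym.
have [b hb] : exists b, piece_v e b x.
  by case/orP: (piece_v_cover e x) => h; [exists true | exists false].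
have hi := piece_induced (piece_emb_is_piece e b).
have [hf | hf] := boolP (piece_v e b (src f)); last first.
  exists (piece_tree e b), (piece_emb e b); apply: eq_induced hi => v.
  by rewrite (piece_v_cut2 fe hf); apply: cut2_eq; rewrite -(piece_v_cut2 fe hf).
have hf' : f \in piece_edges e b by rewrite inE /= fe hf -(piece_v_src_tgt _ fe) hf.
have hx : x \in piece_verts e b by [].
pose f' : 'I_(Defs.one (piece_tree e b)) := enum_rank_in hf' f.
pose w : 'I_(onv (piece_tree e b)) := enum_rank_in hx x.
have ef' : emb_e (piece_emb e b) f' = f by rewrite /= /piece_emap enum_rankK_in.
have ew : emb_v (piece_emb e b) w = x by rewrite /= /piece_vmap enum_rankK_in.
have [b' hb'] : exists b', piece_v f' b' w.
  by case/orP: (piece_v_cover f' w) => h; [exists true | exists false].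
have hj := piece_induced (piece_emb_is_piece f' b').
exists (piece_tree f' b'), (emb_comp (piece_emb e b) (piece_emb f' b')).
apply: eq_induced (induced_comp hi hj) => v.
rewrite (emb_img_piece_v hi) ef'; apply: cut2_eq.
by rewrite -ef' -(emb_img_piece_v hi); apply/existsP; exists w; rewrite ew eqxx.
Qed.

End TwoEdges.

(** * Tensors over free modules *)

Import GRing.Theory.
Local Open Scope ring_scope.

Section FreegLift.
Variables (R : comNzRingType) (J : choiceType) (M : lmodType R) (f : J -> M).

HB.instance Definition _ :=
  GRing.isZmodMorphism.Build _ _ (fglift f) (lift_is_additive f).

(* [a *: u] unfolds to [\sum_(z <- dom u) << a * coeff z u *g z >>]. *)
Lemma fglift_is_scalable : scalable (fglift f).
Proof.
move=> a u; rewrite -[in RHS](freeg_sumE u) !raddf_sum /=.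
by apply: eq_bigr => z _; rewrite !liftU scalerA.
Qed.

HB.instance Definition _ :=
  GRing.isScalable.Build _ _ _ _ (fglift f) fglift_is_scalable.

Lemma fglift1 x : fglift f << x >> = f x.
Proof. by rewrite liftU scale1r. Qed.

Lemma fgliftE u : fglift f u = \sum_(z <- dom u) coeff z u *: f z.
Proof. by rewrite -{1}(freeg_sumE u) raddf_sum; apply: eq_bigr => z _; rewrite /= liftU. Qed.

End FreegLift.

Section Tensor.
Variables (R : comNzRingType) (K : choiceType).

HB.instance Definition _ := GRing.Linear.copy (@tperm R K) (fglift _).
HB.instance Definition _ := GRing.Linear.copy (@ttau R K) (fglift _).
HB.instance Definition _ (nu : F1 R K -> F2 R K) :=
  GRing.Linear.copy (id_tensor nu) (fglift _).

Definition ltensor (a : K) : F2 R K -> F3 R K :=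
  fglift (fun q : K * K => << (a, q.1, q.2) >>).

HB.instance Definition _ a := GRing.Linear.copy (ltensor a) (fglift _).

Definition wedge (a b : K) : F2 R K := << (a, b) >> - << (b, a) >>.
Definition lwedge (a b c : K) : F3 R K := << (a, b, c) >> - << (a, c, b) >>.

Lemma lwedgeC a b c : lwedge a b c = - lwedge a c b.
Proof. by rewrite /lwedge opprB. Qed.

Lemma tperm_wedge a b : tperm (wedge a b) = - wedge a b.
Proof. by rewrite raddfB /= /tperm !fglift1 opprB. Qed.

Lemma id_tensorU (nu : F1 R K -> F2 R K) a b :
  id_tensor nu << (a, b) >> = ltensor a (nu << b >>).
Proof. exact: fglift1. Qed.

Lemma ltensor_wedge a b c : ltensor a (wedge b c) = lwedge a b c.
Proof. by rewrite raddfB /= /ltensor !fglift1. Qed.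

Definition cyc (w : F3 R K) := w + ttau w + ttau (ttau w).

Lemma cyc_is_linear : linear cyc.
Proof. by move=> a u v; rewrite /cyc !linearP !scalerDr !addrA (ACl (1*3*5*2*4*6))%AC. Qed.

HB.instance Definition _ := GRing.isLinear.Build _ _ _ _ cyc cyc_is_linear.

Lemma cycU x y z :
  cyc << (x, y, z) >> = << (x, y, z) >> + << (z, x, y) >> + << (y, z, x) >>.
Proof. by rewrite /cyc /ttau !fglift1. Qed.

Lemma cyc_lwedge_pair a b m : cyc (lwedge a b m + lwedge b a m) = 0.
Proof.
rewrite raddfD !raddfB /= !cycU.
rewrite [<< (b, a, m) >> + _ + _](ACl (3*1*2))%AC.
rewrite [<< (b, m, a) >> + _ + _](ACl (2*3*1))%AC.
by rewrite addrC addrA subrK subrr.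
Qed.

End Tensor.

Lemma sum_ord_antisym (V : zmodType) n (H : 'I_n -> 'I_n -> V) :
  (forall e f, e != f -> H e f = - H f e) ->
  \sum_(e < n) \sum_(f < n | f != e) H e f = 0.
Proof.
move=> antisym.
have split_ne e : \sum_(f < n | f != e) H e f =
   \sum_(f < n | (f < e)%N) H e f + \sum_(f < n) (if (e < f)%N then H e f else 0).
  rewrite (bigID (fun f : 'I_n => (f < e)%N)) /=; congr (_ + _).
    by apply: eq_bigl => f; case: (ltnP f e) => h; rewrite ?andbT ?andbF // neq_ltn h.
  by rewrite big_mkcond; apply: eq_bigr => f _; rewrite -leqNgt ltn_neqAle eq_sym.
rewrite (eq_bigr _ (fun e _ => split_ne e)) big_split /= exchange_big /= -big_split /=.
apply: big1 => e _; rewrite big_mkcond -big_split /=; apply: big1 => f _.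
case: ifP => lt_ef; last by rewrite addr0.
by rewrite (antisym e f) ?addNr // neq_ltn lt_ef orbT.
Qed.

(** * The cobracket on generators *)

Section Nu0Generators.
Variables (R : comNzRingType) (psi : otree_structure).
Local Notation K := (hclass psi).

Lemma nu_edge_induced T (t : psi_obj psi T) e S1 (i1 : emb S1 T) S2 (i2 : emb S2 T) :
  induced i1 (piece_v e true) -> induced i2 (piece_v e false) ->
  nu_edge R t e = wedge R (cls (ptree (psi_map i1 t))) (cls (ptree (psi_map i2 t))).
Proof.
move=> h1 h2; rewrite /nu_edge; set P := fun z : F2 R K => _.
have [|S1' [i1' [S2' [i2' [p1 p2 /= ->]]]]] := epsilon_spec (inhabits 0) P.
  exists (wedge R (cls (ptree (psi_map (piece_emb e true) t)))
                  (cls (ptree (psi_map (piece_emb e false) t)))).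
  by exists (piece_tree e true), (piece_emb e true), (piece_tree e false), (piece_emb e false);
    split=> //; apply: piece_emb_is_piece.
by rewrite /wedge (induced_cls t (piece_induced p1) h1) (induced_cls t (piece_induced p2) h2).
Qed.

Lemma nu_edgeE T (t : psi_obj psi T) e :
  nu_edge R t e = wedge R (sub_cls t (piece_v e true)) (sub_cls t (piece_v e false)).
Proof.
have h1 := piece_induced (piece_emb_is_piece e true).
have h2 := piece_induced (piece_emb_is_piece e false).
by rewrite (nu_edge_induced t h1 h2) -(sub_cls_induced t h1) -(sub_cls_induced t h2).
Qed.

Lemma nu_edge_homeo T T' (j : emb T T') (t : psi_obj psi T) (t' : psi_obj psi T') e :
  bijective (emb_v j) -> bijective (emb_e j) -> psi_map j t' = t ->
  nu_edge R t' (emb_e j e) = nu_edge R t e.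
Proof.
move=> bv be jt.
have h1 := piece_induced (piece_emb_is_piece e true).
have h2 := piece_induced (piece_emb_is_piece e false).
have h1' := eq_induced (emb_img_piece_v_homeo bv be e true) (induced_comp (bij_induced bv be) h1).
have h2' := eq_induced (emb_img_piece_v_homeo bv be e false) (induced_comp (bij_induced bv be) h2).
by rewrite (nu_edge_induced t h1 h2) (nu_edge_induced t' h1' h2') !psi_comp jt.
Qed.

Lemma nu0_genE T (t : psi_obj psi T) :
  nu0_gen R (cls (ptree t)) =
  \sum_(e < Defs.one T) wedge R (sub_cls t (piece_v e true)) (sub_cls t (piece_v e false)).
Proof.
rewrite /nu0_gen; set P := fun z => _.
have [|T' [t' [/cls_homeo/homeo_sym [j [bv be /= jt]] ->]]] := epsilon_spec (inhabits 0) P.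
  by eexists; exists T, t.
rewrite (reindex (emb_e j)) /=; last exact: onW_bij.
by apply: eq_bigr => e _; rewrite (nu_edge_homeo _ bv be jt) nu_edgeE.
Qed.

Lemma tperm_nu0_gen (z : K) : tperm (nu0_gen R z) = - nu0_gen R z.
Proof.
have [[T t] <-] := cls_surj z.
by rewrite nu0_genE raddf_sum -sumrN; apply: eq_bigr => e _; apply: tperm_wedge.
Qed.

Section CoJacobi.
Variables (T : otree) (t : psi_obj psi T).
Local Notation src := (@osrc T).
Local Notation tgt := (@otgt T).
Local Notation X A := (sub_cls t A).

Lemma sub_cls_cut2 e f x A : e != f -> cut2 e f x =1 A -> X (cut2 e f x) = X A.
Proof. by move=> ef eqA; have [S [i hi]] := cut2_induced x ef; apply: eq_sub_cls hi eqA. Qed.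

Lemma sub_cls_cut2C e f x : e != f -> X (cut2 f e x) = X (cut2 e f x).
Proof. by move=> ef; apply: sub_cls_cut2; [rewrite eq_sym | apply: cut2C]. Qed.

Lemma sub_cls_piece_piece e b (f' : 'I_(Defs.one (piece_tree e b))) b' :
  sub_cls (psi_map (piece_emb e b) t) (piece_v f' b') =
  X (cut2 e (emb_e (piece_emb e b) f') (endp (emb_e (piece_emb e b) f') b')).
Proof.
have hi := piece_induced (piece_emb_is_piece e b).
have hj := piece_induced (piece_emb_is_piece f' b').
rewrite (sub_cls_induced _ hj) -psi_comp -(sub_cls_induced t (induced_comp hi hj)).
exact: eq_sub_cls (induced_comp hi hj) (emb_img_piece_v hi f' b').
Qed.

Lemma nu0_gen_piece e b :
  nu0_gen R (X (piece_v e b)) =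
  \sum_(f in piece_edges e b) wedge R (X (cut2 e f (tgt f))) (X (cut2 e f (src f))).
Proof.
have hi := piece_induced (piece_emb_is_piece e b).
rewrite (sub_cls_induced t hi) nu0_genE [RHS]big_enum_val; apply: eq_bigr => f' _.
by rewrite !sub_cls_piece_piece.
Qed.

(* The part of [(id (x) nu0) (nu0 (T, t))] indexed by the ordered pair of edges
   [(e, f)]: [f] lies on one side of [e], and [nu0] of that side cuts it at [f]. *)
Definition cojacobi_term e f : F3 R K :=
  if piece_v e true (src f)
  then - lwedge R (X (piece_v e false)) (X (cut2 e f (tgt f))) (X (cut2 e f (src f)))
  else lwedge R (X (piece_v e true)) (X (cut2 e f (tgt f))) (X (cut2 e f (src f))).

Lemma id_tensor_nu0_gen :
  id_tensor (@nu0 R psi) (nu0_gen R (cls (ptree t))) =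
  \sum_(e < Defs.one T) \sum_(f | f != e) cojacobi_term e f.
Proof.
rewrite nu0_genE raddf_sum; apply: eq_bigr => e _.
have ltensor_nu0 a b : ltensor a (@nu0 R psi << X (piece_v e b) >>) =
    \sum_(f in piece_edges e b) lwedge R a (X (cut2 e f (tgt f))) (X (cut2 e f (src f))).
  rewrite /nu0 fglift1 nu0_gen_piece raddf_sum.
  by apply: eq_bigr => f _; rewrite /= ltensor_wedge.
rewrite raddfB /= !id_tensorU !ltensor_nu0.
rewrite big_mkcond [Y in _ - Y]big_mkcond [RHS]big_mkcond -sumrB.
apply: eq_bigr => f _; rewrite /cojacobi_term !inE /=.
have [-> | fe] := eqVneq f e; first by rewrite subrr.
rewrite -!(piece_v_src_tgt _ fe) !andbb.
by case: (boolP (piece_v e true (src f))) => h;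
  rewrite -[false]/(~~ true) piece_vN h ?sub0r ?subr0.
Qed.

Lemma piece_v_side e f b : f != e -> piece_v e (piece_v e true (src f)) (endp f b).
Proof.
move=> fe; have side_src : piece_v e (piece_v e true (src f)) (src f).
  by case hf: (piece_v e true (src f)); rewrite // -[false]/(~~ true) piece_vN hf.
by case: b; rewrite /endp -?(piece_v_src_tgt _ fe).
Qed.

Lemma cojacobi_termE e f : e != f ->
  cojacobi_term e f =
  let be := piece_v e true (src f) in let bf := piece_v f true (src e) in
  let Xe := X (cut2 e f (endp e (~~ be))) in
  let Xf := X (cut2 e f (endp f (~~ bf))) in
  let M := X (cut2 e f (endp f bf)) in
  if be == bf then lwedge R Xe Xf M else - lwedge R Xe Xf M.
Proof.
move=> ef; have fe : f != e by rewrite eq_sym.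
have far : X (piece_v e (~~ piece_v e true (src f))) =
           X (cut2 e f (endp e (~~ piece_v e true (src f)))).
  have nf : ~~ piece_v e (~~ piece_v e true (src f)) (src f).
    by rewrite piece_vN negbK; apply: (@piece_v_side e f false fe).
  exact: eq_sub_cls (piece_induced (piece_emb_is_piece _ _)) (piece_v_cut2 fe nf).
move: far; rewrite /cojacobi_term /=.
case: (boolP (piece_v e true (src f))) => he far;
  case: (boolP (piece_v f true (src e))) => hf /=; rewrite far /endp //=.
  by rewrite lwedgeC opprK.
by rewrite lwedgeC.
Qed.

Lemma cyc_cojacobi_term e f : e != f ->
  cyc (cojacobi_term e f) = - cyc (cojacobi_term f e).
Proof.
move=> ef; have fe : f != e by rewrite eq_sym.
(* The near ends of [e] and [f] both lie in the middle part. *)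
have middle : X (cut2 e f (endp e (piece_v e true (src f)))) =
              X (cut2 e f (endp f (piece_v f true (src e)))).
  apply: (sub_cls_cut2 ef); apply: cut2_eq; apply: (cut2_endp ef).
    by rewrite -piece_vE; apply: piece_v_side.
  exact: piece_v_side.
rewrite (cojacobi_termE ef) (cojacobi_termE fe) /= !(sub_cls_cut2C _ ef) middle eq_sym.
have /eqP := cyc_lwedge_pair R
  (X (cut2 e f (endp e (~~ piece_v e true (src f)))))
  (X (cut2 e f (endp f (~~ piece_v f true (src e)))))
  (X (cut2 e f (endp f (piece_v f true (src e))))).
by rewrite raddfD addr_eq0 => /eqP pair; case: ifP => _; rewrite ?raddfN /= pair.
Qed.

End CoJacobi.

Lemma cyc_id_tensor_nu0_gen (z : K) : cyc (id_tensor (@nu0 R psi) (nu0_gen R z)) = 0.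
Proof.
have [[T t] <-] := cls_surj z.
rewrite id_tensor_nu0_gen raddf_sum; under eq_bigr do rewrite raddf_sum.
exact: sum_ord_antisym (@cyc_cojacobi_term T t).
Qed.

End Nu0Generators.

Theorem lemma6p2 (R : comNzRingType) (psi : otree_structure) :
  lie_cobracket (@nu0 R psi).
Proof.
have nu0E (x : F1 R (hclass psi)) :
    @nu0 R psi x = \sum_(z <- dom x) coeff z x *: nu0_gen R z by apply: fgliftE.
split=> [|x|x]; first exact: linearP.
- rewrite nu0E raddf_sum -sumrN; apply: eq_bigr => z _.
  by rewrite [LHS]linearZ /= tperm_nu0_gen scalerN.
- change (cyc (id_tensor (@nu0 R psi) (nu0 x)) = 0).
  rewrite nu0E !raddf_sum big1 // => z _.
  by rewrite /= !linearZ /= cyc_id_tensor_nu0_gen scaler0.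
Qed.
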